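(* Let $G$ be a finite group with identity $e$, $R[G]$ its real group algebra, $S=\{x\in R[G]:\sum_gx_g=1,\ x_g\ge0\ \forall g\}$, and $x\in S$. Then: (1) the elements $e,x,x^2,\dots,x^{n_x-1}$ of $R[G]$ are linearly independent; (2) for nonnegative integers $r_1,r_2$, one has $c_xx^{r_1}=c_xx^{r_2}$ if and only if $r_1\equiv r_2\pmod{m_x}$.
   Context: $\mathrm{Supp}(y)=\{g:y_g\ne0\}$, $\mathbb N=\{1,2,\dots\}$, $x^0=e$. For $x\in S$: $n_x=\min\{k\in\mathbb N:(x^k)_e\ne0\}$; $G_x$ is the subgroup of $G$ generated by $\mathrm{Supp}(x^{n_x})$; $c_x=\frac1{|G_x|}\sum_{g\in G_x}g$; $m_x=\min\{k\in\mathbb N:\mathrm{Supp}(x^k)\subset G_x\}$. *)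

From HB Require Import structures.
From mathcomp Require Import all_boot all_order all_algebra all_fingroup.
From mathcomp Require Import boolp reals.
Set Implicit Arguments. Unset Strict Implicit. Unset Printing Implicit Defensive.
Import Order.TTheory GRing.Theory Num.Theory.
Local Open Scope ring_scope.

(* The real group algebra R[G]: elements are functions G -> R (x = sum_g x_g g). *)
Notation galg R gT := {ffun gT -> R}.

Section GroupAlgebra.
Variables (R : realType) (gT : finGroupType).
Local Notation galg := (galg R gT).

Definition gone : galg := [ffun g => (g == 1%g)%:R].

Definition gmul (x y : galg) : galg :=
  [ffun g => \sum_(h : gT) x h * y (h^-1 * g)%g].

Definition gpow (x : galg) (k : nat) : galg := iter k (gmul x) gone.

Definition supp (y : galg) : {set gT} := [set g | y g != 0].

Definition inS (x : galg) : Prop := (\sum_(g : gT) x g = 1) /\ (forall g, 0 <= x g).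

(* least k satisfying a predicate (0 if none exists; never used in that case) *)
Definition least (P : pred nat) : nat :=
  match pselect (exists k, P k) with
  | left h => ex_minn h
  | right _ => 0%N
  end.

Definition nx (x : galg) : nat := least (fun k => (0 < k)%N && (gpow x k 1%g != 0)).

Definition Gx (x : galg) : {group gT} := <<supp (gpow x (nx x))>>%G.

Definition cx (x : galg) : galg := [ffun g => (g \in Gx x)%:R / #|Gx x|%:R].

Definition mx (x : galg) : nat :=
  least (fun k => (0 < k)%N && (supp (gpow x k) \subset Gx x)).

End GroupAlgebra.

Definition lin_indep (R : realType) (gT : finGroupType) (n : nat)
    (v : 'I_n -> {ffun gT -> R}) : Prop :=
  forall c : 'I_n -> R,
    (forall g : gT, \sum_(i < n) c i * v i g = 0) -> forall i, c i = 0.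

(* For nonnegative y and z the support of y z is the product set Supp(y) Supp(z),
   so with A = Supp(x) the support of x^k is A^k.

   (1) Pairing a relation sum_(j < n_x) c_j x^j = 0 with x^(n_x - i) and reading
   off the coefficient of e gives a triangular system in the c_j whose diagonal
   entries (x^(n_x))_e are nonzero.

   (2) Fix a in A. Comparing two elements of A^(n_x) = A A^(n_x - 1) = A^(n_x - 1) A
   shows b c^-1 and b^-1 c lie in G_x for all b, c in A; hence a normalises G_x and
   Supp(x^r) lies in the coset G_x a^r. Since x^r has total mass 1, c_x x^r is the
   uniform distribution on G_x a^r, so c_x x^r1 = c_x x^r2 iff G_x a^r1 = G_x a^r2,
   i.e. iff r1 = r2 modulo the order of the coset a G_x in N(G_x)/G_x; that order
   is m_x because Supp(x^k) lies in G_x exactly when a^k does. *)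
From HB Require Import structures.
From mathcomp Require Import all_boot all_order all_algebra all_fingroup.
From mathcomp Require Import boolp reals.
From mathcomp Require Import cyclic zify.
Import Order.TTheory GRing.Theory Num.Theory.
Set Implicit Arguments. Unset Strict Implicit. Unset Printing Implicit Defensive.
Local Open Scope ring_scope.

Lemma leastP (P : pred nat) : (exists k, P k) ->
  P (least P) /\ forall k, P k -> (least P <= k)%N.
Proof.
move=> exP; rewrite /least; case: pselect => [exP'|/(_ exP) //].
by case: (ex_minnP exP') => m Pm m_min; split.
Qed.

Lemma least_eq (P : pred nat) k : P k -> (forall j, P j -> (k <= j)%N) ->
  least P = k.
Proof.
move=> Pk k_min; have [Pl l_min] := leastP (ex_intro _ k Pk).
by apply/eqP; rewrite eqn_leq l_min // k_min.
Qed.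

Lemma mem_expg_coset_order (gT : finGroupType) (H : {group gT}) (a : gT) k :
  a \in 'N(H)%g -> ((a ^+ k)%g \in H) = (#[coset H a]%g %| k)%N.
Proof.
move=> aN; rewrite order_dvdn -morphX //.
apply/idP/eqP => [/coset_id //|]; exact/coset_idr/groupX.
Qed.

Lemma eq_rcoset_expg (gT : finGroupType) (H : {group gT}) (a : gT) r1 r2 :
  a \in 'N(H)%g ->
  (H :* a ^+ r1 = H :* a ^+ r2)%g <-> r1 = r2 %[mod #[coset H a]%g].
Proof.
move=> aN; have aXN k : (a ^+ k)%g \in 'N(H)%g by rewrite groupX.
rewrite (rwP rcoset_eqP) -(rwP (rcoset_kercosetP (aXN r1) (aXN r2))) !morphX //.
by rewrite (rwP eqP) eq_expg_mod_order; split => /eqP.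
Qed.

Section ConvolutionAlgebra.
Variables (R : realType) (gT : finGroupType).
Implicit Types y z w : {ffun gT -> R}.

Lemma gmulE y z g : gmul y z g = \sum_h y h * z (h^-1 * g)%g.
Proof. by rewrite ffunE. Qed.

Lemma gmul_at1 y z : gmul y z 1%g = \sum_g y g^-1%g * z g.
Proof.
rewrite gmulE (reindex_inj invg_inj); apply: eq_bigr => g _.
by rewrite invgK mulg1.
Qed.

Lemma gmulA y z w : gmul y (gmul z w) = gmul (gmul y z) w.
Proof.
apply/ffunP=> g; rewrite !gmulE.
under [RHS]eq_bigr do rewrite gmulE mulr_suml.
rewrite exchange_big /=; apply: eq_bigr => h _.
rewrite gmulE mulr_sumr [RHS](reindex_inj (mulgI h)) /=; apply: eq_bigr => k _.
by rewrite mulKg mulrA invMg mulgA.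
Qed.

Lemma gmul1l y : gmul (gone R gT) y = y.
Proof.
apply/ffunP=> g; rewrite gmulE (bigD1 1%g) //= !ffunE eqxx mul1r invg1 mul1g.
by rewrite big1 ?addr0 // => h /negbTE h1; rewrite ffunE h1 mul0r.
Qed.

Lemma gmul1r y : gmul y (gone R gT) = y.
Proof.
apply/ffunP=> g; rewrite gmulE (bigD1 g) //= !ffunE mulVg eqxx mulr1.
by rewrite big1 ?addr0 // => h hg; rewrite ffunE -eq_mulVg1 (negbTE hg) mulr0.
Qed.

Lemma gpowS y k : gpow y k.+1 = gmul y (gpow y k).
Proof. by []. Qed.

Lemma gpowD y k l : gpow y (k + l) = gmul (gpow y k) (gpow y l).
Proof.
elim: k => [|k IHk]; first by rewrite add0n gmul1l.
by rewrite addSn gpowS IHk gmulA.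
Qed.

Lemma gpowSr y k : gpow y k.+1 = gmul (gpow y k) y.
Proof. by rewrite -addn1 gpowD gpowS gmul1r. Qed.

Definition nonneg y := forall g, 0 <= y g.

Lemma gmul_ge0 y z : nonneg y -> nonneg z -> nonneg (gmul y z).
Proof. by move=> y0 z0 g; rewrite gmulE sumr_ge0 // => h _; rewrite mulr_ge0. Qed.

Lemma sum_gmul y z : \sum_g gmul y z g = (\sum_g y g) * (\sum_g z g).
Proof.
under eq_bigr do rewrite gmulE.
rewrite exchange_big mulr_suml /=; apply: eq_bigr => h _.
rewrite -mulr_sumr; congr (_ * _).
by rewrite [RHS](reindex_inj (mulgI h^-1%g)).
Qed.

Lemma supp_gmul y z : nonneg y -> nonneg z ->
  supp (gmul y z) = (supp y * supp z)%g.
Proof.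
move=> y0 z0; apply/setP => g.
rewrite inE gmulE psumr_neq0 => [|h _]; last exact: mulr_ge0.
have pos_mul h k : (0 < y h * z k) = (h \in supp y) && (k \in supp z).
  by rewrite lt0r mulr_ge0 // andbT mulf_eq0 negb_or !inE.
apply/hasP/mulsgP => [[h _] | [h k hy kz ->]].
  by rewrite /= pos_mul => /andP[hy kz]; exists h (h^-1 * g)%g; rewrite ?mulKVg.
by exists h; rewrite ?mem_index_enum //= pos_mul mulKg hy.
Qed.

Lemma supp_neq0 y : \sum_g y g != 0 -> supp y != set0.
Proof.
apply: contraNneq => y_supp0; rewrite big1 // => g _.
by have := in_set0 g; rewrite -y_supp0 inE => /negbFE/eqP.
Qed.

Lemma lin_indep_trig n (v : 'I_n -> {ffun gT -> R}) (f : 'I_n -> gT -> R) :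
  (forall i j : 'I_n, (i < j)%N -> \sum_g f j g * v i g = 0) ->
  (forall i, \sum_g f i g * v i g != 0) -> lin_indep v.
Proof.
move=> trig diag c cv0.
pose M : 'M[R]_n := \matrix_(i, j) \sum_g f j g * v i g.
have M_unit : M \in unitmx.
  rewrite unitmxE det_trig; last by apply/is_trig_mxP => i j ij; rewrite mxE trig.
  by rewrite unitfE prodf_seq_neq0; apply/allP => i _; rewrite mxE diag.
have cM0 : \row_i c i *m M = 0.
  apply/rowP => j; rewrite !mxE.
  under eq_bigr do rewrite !mxE mulr_sumr.
  rewrite exchange_big big1 // => g _.
  under eq_bigr do rewrite mulrCA.
  by rewrite -mulr_sumr cv0 mulr0.
move=> i; have /rowP/(_ i) := mulmxK M_unit (\row_i c i).
by rewrite cM0 mul0mx !mxE.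
Qed.

Lemma gmul_unif_rcoset (H : {group gT}) b y :
  \sum_g y g = 1 -> supp y \subset (H :* b)%g ->
  gmul [ffun g => (g \in H)%:R / #|H|%:R] y
    = [ffun g => (g \in H :* b)%g%:R / #|H|%:R].
Proof.
move=> y1 yHb; apply/ffunP => g; rewrite gmulE ffunE.
have inj : injective (fun k => g * k^-1)%g by move=> k1 k2 /mulgI/invg_inj.
rewrite (reindex_inj inj) /= -[RHS]mulr1 -y1 mulr_sumr.
apply: eq_bigr => k _; rewrite ffunE invMg invgK mulgKV.
have [-> | yk] := eqVneq (y k) 0; first by rewrite !mulr0.
have kHb : (k * b^-1)%g \in H by rewrite -mem_rcoset (subsetP yHb) // inE.
have -> : (g * k^-1 = (g * b^-1) * (k * b^-1)^-1)%g.
  by rewrite invMg invgK !mulgA mulgKV.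
by rewrite groupMr ?groupV // mem_rcoset.
Qed.

End ConvolutionAlgebra.

Section SimplexPowers.
Variables (R : realType) (gT : finGroupType) (x : {ffun gT -> R}).
Hypothesis xS : inS x.

Lemma simplex_ge0 : nonneg x. Proof. by case: xS. Qed.

Lemma gpow_ge0 k : nonneg (gpow x k).
Proof.
elim: k => [|k IHk] g; first by rewrite ffunE ler0n.
exact: gmul_ge0 simplex_ge0 IHk g.
Qed.

Lemma sum_gpow k : \sum_g gpow x k g = 1.
Proof.
elim: k => [|k IHk].
  by rewrite (bigD1 1%g) //= big1 => [|g /negbTE g1]; rewrite ffunE ?eqxx ?addr0 ?g1.
by rewrite gpowS sum_gmul IHk mulr1; case: xS.
Qed.

Lemma supp_gpowS k : supp (gpow x k.+1) = (supp x * supp (gpow x k))%g.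
Proof. exact: supp_gmul simplex_ge0 (gpow_ge0 k). Qed.

Lemma supp_gpowSr k : supp (gpow x k.+1) = (supp (gpow x k) * supp x)%g.
Proof. by rewrite gpowSr; apply: supp_gmul (gpow_ge0 k) simplex_ge0. Qed.

Lemma supp_gpow_neq0 k : supp (gpow x k) != set0.
Proof. by rewrite supp_neq0 // sum_gpow oner_eq0. Qed.

Lemma supp_neq0_simplex : supp x != set0.
Proof. by case: xS => x1 _; rewrite supp_neq0 // x1 oner_eq0. Qed.

Lemma mem_supp_gpow a k : a \in supp x -> (a ^+ k)%g \in supp (gpow x k).
Proof.
move=> ax; elim: k => [|k IHk]; first by rewrite inE ffunE eqxx oner_eq0.
by rewrite supp_gpowS expgS mem_mulg.
Qed.

Lemma nx_spec : [/\ (0 < nx x)%N, gpow x (nx x) 1%g != 0 &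
  forall k, (0 < k < nx x)%N -> gpow x k 1%g = 0].
Proof.
have ex_nx : exists k, (0 < k)%N && (gpow x k 1%g != 0).
  have /set0Pn[a ax] := supp_neq0_simplex.
  exists #[a]%g; rewrite order_gt0 /=.
  by have := mem_supp_gpow #[a]%g ax; rewrite expg_order inE.
have [/andP[n_gt0 xn1] n_min] := leastP ex_nx; split => // k /andP[k_gt0 k_lt].
by apply/eqP; apply: contraTT k_lt => xk1; rewrite -leqNgt n_min // k_gt0.
Qed.

Lemma lin_indep_gpow : lin_indep (fun i : 'I_(nx x) => gpow x i).
Proof.
have [n_gt0 xn1 xk1] := nx_spec.
apply: (lin_indep_trig (f := fun i g => gpow x (nx x - i) g^-1%g)) => [i j ij | i] /=;
  rewrite -gmul_at1 -gpowD.
  by apply: xk1; have := ltn_ord j; lia.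
by rewrite subnK // ltnW.
Qed.

End SimplexPowers.

Section CosetOfPowers.
Variables (R : realType) (gT : finGroupType) (x : {ffun gT -> R}).
Hypothesis xS : inS x.
Variable a : gT.
Hypothesis ax : a \in supp x.
Local Notation n := (nx x).
Local Notation H := (Gx x).

Lemma supp_gpow_nx :
  supp (gpow x n) = (supp x * supp (gpow x n.-1))%g
  /\ supp (gpow x n) = (supp (gpow x n.-1) * supp x)%g.
Proof.
have [n_gt0 _ _] := nx_spec xS.
by split; rewrite -{1}(prednK n_gt0); [exact: supp_gpowS | exact: supp_gpowSr].
Qed.

Lemma supp_gpow_nx_Gx g : g \in supp (gpow x n) -> g \in H.
Proof. exact: mem_gen. Qed.

Lemma mulgV_supp_Gx b c : b \in supp x -> c \in supp x -> (b * c^-1)%g \in H.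
Proof.
move=> bA cA; have /set0Pn[u ux] := supp_gpow_neq0 xS n.-1.
have mem_u d : d \in supp x -> (d * u)%g \in H.
  by move=> dx; rewrite supp_gpow_nx_Gx // supp_gpow_nx.1 mem_mulg.
by rewrite -(mulgK u b) -mulgA -invMg groupM ?groupV ?mem_u.
Qed.

Lemma mulVg_supp_Gx b c : b \in supp x -> c \in supp x -> (b^-1 * c)%g \in H.
Proof.
move=> bA cA; have /set0Pn[u ux] := supp_gpow_neq0 xS n.-1.
have mem_u d : d \in supp x -> (u * d)%g \in H.
  by move=> dx; rewrite supp_gpow_nx_Gx // supp_gpow_nx.2 mem_mulg.
by rewrite -(mulKg u c) mulgA -invMg groupM ?groupV ?mem_u.
Qed.

Lemma norm_Gx : a \in 'N(H)%g.
Proof.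
have suppJ : (supp (gpow x n) :^ a \subset H)%g.
  apply/subsetP => _ /imsetP[g + ->]; rewrite supp_gpow_nx.1.
  case/mulsgP => b u bx ux ->; rewrite conjgE !mulgA -mulgA groupM //.
    exact: mulVg_supp_Gx.
  by rewrite supp_gpow_nx_Gx // supp_gpow_nx.2 mem_mulg.
apply/normP/eqP; rewrite eqEcard cardJg leqnn andbT.
by rewrite /Gx /= -genJ gen_subG.
Qed.

Lemma supp_gpow_rcoset k : supp (gpow x k) \subset (H :* a ^+ k)%g.
Proof.
elim: k => [|k IHk]; apply/subsetP => g.
  by rewrite inE ffunE pnatr_eq0 eqb0 negbK => /eqP ->; rewrite expg0 rcoset1.
rewrite (supp_gpowSr xS) => /mulsgP[u b /(subsetP IHk)/rcosetP[h1 h1H ->] bx ->].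
have /rcosetP[h2 h2H ->] : b \in (H :* a)%g by rewrite mem_rcoset mulgV_supp_Gx.
apply/rcosetP; exists (h1 * h2 ^ (a ^+ k)^-1)%g.
  by rewrite groupM // memJ_norm // groupV groupX // norm_Gx.
by rewrite expgSr conjgE invgK !mulgA mulgKV.
Qed.

Lemma cx_gmul_gpow k :
  gmul (cx x) (gpow x k) = [ffun g => (g \in H :* a ^+ k)%g%:R / #|H|%:R].
Proof. exact/gmul_unif_rcoset/supp_gpow_rcoset/sum_gpow. Qed.

Lemma mx_order : mx x = #[coset H a]%g.
Proof.
have supp_sub_Gx k : (supp (gpow x k) \subset H) = ((a ^+ k)%g \in H).
  apply/idP/idP => [/subsetP -> // | aH]; first exact: mem_supp_gpow.
  by rewrite -(rcoset_id aH) supp_gpow_rcoset.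
apply: least_eq => [|j /andP[j_gt0]];
  rewrite supp_sub_Gx mem_expg_coset_order ?norm_Gx //; last exact: dvdn_leq.
by rewrite order_gt0 dvdnn.
Qed.

Lemma cx_gmul_gpow_eq r1 r2 :
  gmul (cx x) (gpow x r1) = gmul (cx x) (gpow x r2)
  <-> (H :* a ^+ r1 = H :* a ^+ r2)%g.
Proof.
rewrite !cx_gmul_gpow; split => [/ffunP/(_ (a ^+ r1)%g) | ->] //.
rewrite !ffunE rcoset_refl; case: rcoset_eqP => // _ /eqP.
by rewrite mul0r mul1r invr_eq0 pnatr_eq0 -leqn0 leqNgt cardG_gt0.
Qed.

End CosetOfPowers.

Theorem proposition2 (R : realType) (gT : finGroupType) (x : {ffun gT -> R}) :
  inS x ->
  lin_indep (fun i : 'I_(nx x) => gpow x i) /\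
  (forall r1 r2 : nat,
     gmul (cx x) (gpow x r1) = gmul (cx x) (gpow x r2) <-> r1 = r2 %[mod mx x]).
Proof.
move=> xS; split; first exact: lin_indep_gpow.
have /set0Pn[a ax] := supp_neq0_simplex xS.
move=> r1 r2; rewrite (cx_gmul_gpow_eq xS ax) (mx_order xS ax).
exact/eq_rcoset_expg/norm_Gx.
Qed.
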